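(* Let $\Gamma$ be a locally finite vertex-transitive weighted graph with distinguished vertex $e$. Let $x,y$ be vertices and suppose there exists a finitely supported non-zero function $f:\Gamma\to\mathbb{R}$ that is harmonic at every vertex other than $x$ and $y$. Then there exists $N>0$ such that the conditional probability $\mathbb{P}_g[\,T_x<T_y\mid\min\{T_x,T_y\}<\infty\,]$ is independent of $g$ for all vertices $g$ with $d(e,g)\ge N$.
   Context: Weighted graph: undirected, no loops or multiple edges, weights $\omega_{xy}=\omega_{yx}>0$, $\deg x=\sum_{y\sim x}\omega_{xy}$; vertex-transitive means the group of weight-preserving automorphisms acts transitively on vertices. $f$ is harmonic at $z$ if $f(z)=\frac{1}{\deg z}\sum_{w\sim z}\omega_{zw}f(w)$. $d$ is the graph metric. $(X_t)_{t\ge0}$ is the random walk stepping from $z$ to neighbour $w$ with probability $\omega_{zw}/\deg z$; $\mathbb{P}_g$ is its law started at $X_0=g$, and $T_z=\inf\{t\ge0:X_t=z\}$ (with $\inf\emptyset=\infty$). *)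

From mathcomp Require Import all_boot all_order all_algebra.
From mathcomp Require Import classical_sets reals.
Set Implicit Arguments. Unset Strict Implicit. Unset Printing Implicit Defensive.
Import Order.TTheory GRing.Theory Num.Theory.
Local Open Scope ring_scope.

Section WGraph.
Variables (R : realType) (V : eqType).

Definition is_lf_wgraph (w : V -> V -> R) (nb : V -> seq V) : Prop :=
  [/\ (forall x y, w x y = w y x),
      (forall x y, 0 <= w x y),
      (forall x y, (y \in nb x) = (0 < w x y)),
      (forall x, w x x = 0) &
      (forall x, uniq (nb x))].

Fixpoint walk (nb : V -> seq V) (n : nat) (a b : V) : Prop :=
  match n with
  | 0%N => a = b
  | n'.+1 => exists2 c, c \in nb a & walk nb n' c b
  end.

Definition connected_graph (nb : V -> seq V) : Prop :=
  forall a b, exists n, walk nb n a b.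

(* N <= d(a,b) for the graph metric d *)
Definition dist_ge (nb : V -> seq V) (N : nat) (a b : V) : Prop :=
  forall n, (n < N)%N -> ~ walk nb n a b.

Definition deg (w : V -> V -> R) (nb : V -> seq V) (x : V) : R :=
  \sum_(y <- nb x) w x y.

Definition harmonic_at (w : V -> V -> R) (nb : V -> seq V) (f : V -> R) (z : V) : Prop :=
  f z = (deg w nb z)^-1 * \sum_(u <- nb z) w z u * f u.

Definition weight_automorphism (w : V -> V -> R) (phi : V -> V) : Prop :=
  bijective phi /\ forall u v, w (phi u) (phi v) = w u v.

Definition vertex_transitive (w : V -> V -> R) : Prop :=
  forall a b, exists phi, weight_automorphism w phi /\ phi a = b.

(* hitp A B n g = P_g[ T_A <= n and T_A < T_B ] for the random walk stepping
   from z to u with probability w z u / deg z. *)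
Fixpoint hitp (w : V -> V -> R) (nb : V -> seq V) (A B : pred V) (n : nat) (g : V) : R :=
  if g \in B then 0 else if g \in A then 1 else
  match n with
  | 0%N => 0
  | n'.+1 => \sum_(u <- nb g) (w g u / deg w nb g) * hitp w nb A B n' u
  end.

(* P_g[ T_A < T_B ] (with T_A < oo), as the monotone limit over n *)
Definition hit_prob (w : V -> V -> R) (nb : V -> seq V) (A B : pred V) (g : V) : R :=
  sup (range (fun n => hitp w nb A B n g)).

(* P_g[ T_x < T_y | min(T_x,T_y) < oo ] *)
Definition cond_hit (w : V -> V -> R) (nb : V -> seq V) (x y g : V) : R :=
  hit_prob w nb (pred1 x) (pred1 y) g / hit_prob w nb (pred2 x y) pred0 g.

End WGraph.

From mathcomp Require Import all_boot all_order all_algebra.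
From mathcomp Require Import classical_sets reals.
From mathcomp Require Import ring lra.
Import Order.TTheory GRing.Theory Num.Theory.
Local Open Scope ring_scope.

(* Let h(g) = P_g[T_x < T_y] and k(g) = P_g[min(T_x, T_y) < oo].  Writing
   K for the transition operator of the walk killed on {x, y}, harmonicity
   of f off {x, y} gives f = f(x) h_n + f(y) (k_n - h_n) + K^(n+1) f for the
   n-step truncations h_n, k_n.  As f is finitely supported, |f| <= c k_M
   for some c, M, so |K^(n+1) f| <= c (k - k_n) -> 0, whence
   f = f(x) h + f(y) (k - h).  Outside a ball containing the support f = 0,
   so h/k = - f(y) / (f(x) - f(y)) there, a constant; and f(x) <> f(y), for
   otherwise f = f(x) k and f vanishing somewhere would force f = 0. *)

Lemma seq_in_ball (V : eqType) (nb : V -> seq V) (e : V) (s : seq V) :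
  connected_graph nb ->
  exists N, (0 < N)%N /\ forall v, v \in s -> exists2 n, (n < N)%N & walk nb n e v.
Proof.
move=> hcon; elim: s => [|v s [N [N_gt0 IH]]]; first by exists 1%N.
have [n walk_v] := hcon e v.
exists (maxn N n.+1); split=> [|u]; first by rewrite leq_max N_gt0.
rewrite inE => /orP[/eqP -> | us]; first by exists n; rewrite // leq_max ltnSn orbT.
by have [m m_lt walk_u] := IH u us; exists m; rewrite // leq_max m_lt.
Qed.

Section HittingProbabilities.
Variables (R : realType) (V : eqType) (w : V -> V -> R) (nb : V -> seq V).
Hypothesis hg : is_lf_wgraph w nb.

Definition step_prob (g u : V) : R := w g u / deg w nb g.

Lemma w_ge0 g u : 0 <= w g u. Proof. by case: hg. Qed.

Lemma deg_ge0 g : 0 <= deg w nb g.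
Proof. by rewrite sumr_ge0 // => u _; apply: w_ge0. Qed.

Lemma step_prob_ge0 g u : 0 <= step_prob g u.
Proof. by rewrite divr_ge0 ?w_ge0 ?deg_ge0. Qed.

Lemma step_prob_gt0 g u : u \in nb g -> 0 < step_prob g u.
Proof.
case: hg => _ _ nbE _ _; rewrite nbE => w_gt0.
have deg_gt0 : 0 < deg w nb g.
  rewrite /deg (big_rem u) ?nbE //=.
  by rewrite ltr_pwDl // sumr_ge0 // => v _; apply: w_ge0.
by rewrite divr_gt0.
Qed.

(* Only [<= 1]: an isolated vertex has degree 0 and all its weights vanish. *)
Lemma sum_step_prob_le1 g : \sum_(u <- nb g) step_prob g u <= 1.
Proof.
rewrite -mulr_suml -/(deg w nb g).
by have [->|deg_neq0] := eqVneq (deg w nb g) 0; rewrite ?mul0r ?mulfV.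
Qed.

Section Targets.
Variables (A B : pred V).
Local Notation hitp := (hitp w nb A B).

Lemma hitp_ge0 n g : 0 <= hitp n g.
Proof.
elim: n g => [|n IH] g /=; first by case: ifP => //; case: ifP.
case: ifP => // _; case: ifP => // _.
by rewrite sumr_ge0 // => u _; rewrite mulr_ge0 ?step_prob_ge0 ?IH.
Qed.

Lemma hitp_le1 n g : hitp n g <= 1.
Proof.
elim: n g => [|n IH] g /=; first by case: ifP => //; case: ifP.
case: ifP => // _; case: ifP => // _.
apply: le_trans (sum_step_prob_le1 g); apply: ler_sum => u _.
by rewrite ler_piMr ?step_prob_ge0 ?IH.
Qed.

Lemma hitp_leS n g : hitp n g <= hitp n.+1 g.
Proof.
elim: n g => [|n IH] g /=; case: ifP => // _; case: ifP => // _.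
  by rewrite sumr_ge0 // => u _; rewrite mulr_ge0 ?step_prob_ge0 ?(hitp_ge0 0).
by apply: ler_sum => u _; rewrite ler_wpM2l ?step_prob_ge0 ?IH.
Qed.

Lemma hitp_nondecreasing m n g : (m <= n)%N -> hitp m g <= hitp n g.
Proof.
move/subnK <-; elim: (n - m)%N => // d IH.
by apply: le_trans IH _; rewrite addSn hitp_leS.
Qed.

Lemma has_sup_hitp g : has_sup (range (hitp^~ g)).
Proof.
split; first by exists (hitp 0 g), 0%N.
by exists 1 => _ [n _ <-]; apply: hitp_le1.
Qed.

Lemma hitp_le_hit_prob n g : hitp n g <= hit_prob w nb A B g.
Proof. by apply: sup_upper_bound; [apply: has_sup_hitp | exists n]. Qed.

Lemma hit_prob_approx g eps : 0 < eps ->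
  exists N, forall n, (N <= n)%N -> hit_prob w nb A B g - hitp n g <= eps.
Proof.
move=> eps_gt0; have [_ [N _ <-] lt_N] := sup_adherent eps_gt0 (has_sup_hitp g).
exists N => n le_Nn; rewrite /hit_prob; have := hitp_nondecreasing _ _ g le_Nn; lra.
Qed.

End Targets.

Lemma hit_prob_self (A : pred V) g : hit_prob w nb A A g = 0.
Proof.
have hitp0 n : hitp w nb A A n g = 0.
  elim: n g => [|n IH] g /=; case: ifP => // -> //.
  by rewrite big1 // => u _; rewrite IH mulr0.
rewrite /hit_prob (_ : range (hitp w nb A A ^~ g) = [set 0]%classic) ?sup1 //.
by apply/seteqP; split=> [_ [n _ <-] | _ ->]; [exact: hitp0 | exists 0%N].
Qed.

Lemma hitp_gt0_walk (A : pred V) n g z :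
  walk nb n g z -> z \in A -> 0 < hitp w nb A pred0 n g.
Proof.
move=> + zA; elim: n g => [|n IH] g /=; first by move=> ->; rewrite zA.
case=> c cg walk_cz; case: ifP => // _; rewrite (big_rem c cg) /=.
apply: ltr_pwDl; first exact: mulr_gt0 (step_prob_gt0 _ _ cg) (IH _ walk_cz).
by rewrite sumr_ge0 // => u _; rewrite mulr_ge0 ?hitp_ge0 ?(step_prob_ge0 g u).
Qed.

Section KilledWalk.
Variables (x y : V).
Hypothesis x_neq_y : x != y.

Definition killed_step (phi : V -> R) (g : V) : R :=
  if (g == x) || (g == y) then 0 else \sum_(u <- nb g) step_prob g u * phi u.

Local Notation K := killed_step.
Local Notation h n := (hitp w nb (pred1 x) (pred1 y) n).
Local Notation k n := (hitp w nb (pred2 x y) pred0 n).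
Local Notation hh := (hit_prob w nb (pred1 x) (pred1 y)).
Local Notation kk := (hit_prob w nb (pred2 x y) pred0).

Lemma killed_step_ext phi psi g : (forall u, phi u = psi u) -> K phi g = K psi g.
Proof. by move=> eq_phi; rewrite /K; case: ifP => // _; apply: eq_bigr => u _; rewrite eq_phi. Qed.

Lemma killed_stepB phi psi g : K (fun u => phi u - psi u) g = K phi g - K psi g.
Proof.
rewrite /K; case: ifP => _; first by rewrite subrr.
by rewrite -sumrB; apply: eq_bigr => u _; ring.
Qed.

Lemma iter_killed_stepZ (c : R) phi n g :
  iter n K (fun u => c * phi u) g = c * iter n K phi g.
Proof.
elim: n g => [|n IH] g //=; rewrite (killed_step_ext _ _ _ IH) /K.
by case: ifP => _; rewrite ?mulr0 // mulr_sumr; apply: eq_bigr => u _; ring.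
Qed.

Lemma iter_killed_step_norm phi psi n g : (forall u, `|phi u| <= psi u) ->
  `|iter n K phi g| <= iter n K psi g.
Proof.
move=> le_phi; elim: n g => [|n IH] g //=; rewrite /K; case: ifP => _.
  by rewrite normr0.
apply: le_trans (ler_norm_sum _ _ _) _; apply: ler_sum => u _.
by rewrite normrM ger0_norm ?step_prob_ge0 // ler_wpM2l ?step_prob_ge0.
Qed.

Lemma hitp_killed (A B : pred V) :
  (forall g, (g \in A) || (g \in B) = (g == x) || (g == y)) ->
  (forall g, g \in B -> g \notin A) ->
  [/\ forall g, hitp w nb A B 0 g = (g \in A)%:R &
      forall n g, hitp w nb A B n.+1 g = (g \in A)%:R + K (hitp w nb A B n) g].
Proof.
move=> stopE disjAB; split=> [|n] g /=; rewrite /K -?stopE.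
  by case: (boolP (g \in B)) => [/disjAB/negbTE ->|_] //; case: (g \in A).
case: (boolP (g \in B)) => [gB|_]; first by rewrite (negbTE (disjAB _ gB)) orbT addr0.
by case: (g \in A); rewrite /= ?addr0 ?add0r.
Qed.

Lemma h_killed : [/\ forall g, h 0 g = (g == x)%:R &
  forall n g, h n.+1 g = (g == x)%:R + K (h n) g].
Proof.
apply: hitp_killed => g; rewrite !inE //.
by move/eqP ->; rewrite eq_sym.
Qed.

Lemma k_killed : [/\ forall g, k 0 g = (g == x)%:R + (g == y)%:R &
  forall n g, k n.+1 g = (g == x)%:R + (g == y)%:R + K (k n) g].
Proof.
have indE g : (g \in pred2 x y)%:R = (g == x)%:R + (g == y)%:R :> R.
  by rewrite !inE; case: (eqVneq g x) => [->|]; rewrite ?(negbTE x_neq_y) ?addr0 ?add0r.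
have [k0 kS] := @hitp_killed (pred2 x y) pred0 (fun g => orbF _) (fun _ => ltac:(done)).
by split=> *; rewrite ?k0 ?kS indE.
Qed.

(* K^(m+1) k_M g is the probability that the walk stops in (m, m + 1 + M]. *)
Lemma iter_killed_step_k M m g : iter m.+1 K (k M) g = k (m.+1 + M) g - k m g.
Proof.
have [k0 kS] := k_killed.
have K_k n u : K (k n) u = k n.+1 u - ((u == x)%:R + (u == y)%:R) by rewrite kS; ring.
elim: m g => [|m IH] g; first by rewrite [iter 1 _ _ _]/= K_k k0 add1n.
rewrite [iter _ _ _ _]/= (killed_step_ext _ _ _ IH) addSn.
by rewrite killed_stepB !K_k; ring.
Qed.

Hypothesis hcon : connected_graph nb.

Lemma k_gt0 g : exists n, 0 < k n g.
Proof. by have [n walk_gx] := hcon g x; exists n; apply: hitp_gt0_walk walk_gx _; rewrite !inE eqxx. Qed.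

Lemma kk_gt0 g : 0 < kk g.
Proof. by have [n k_gt0] := k_gt0 g; apply: lt_le_trans k_gt0 (hitp_le_hit_prob _ _ n g). Qed.

Lemma finsupp_dominated_k (F : V -> R) (s : seq V) :
  (forall v, v \notin s -> F v = 0) ->
  exists M (c : R), 0 <= c /\ forall v, `|F v| <= c * k M v.
Proof.
move=> Fs; suff [M [c [c_ge0 domF]]] : exists M (c : R),
    0 <= c /\ forall v, v \in s -> `|F v| <= c * k M v.
  exists M, c; split=> // v; have [/domF //|/Fs ->] := boolP (v \in s).
  by rewrite normr0 mulr_ge0 ?hitp_ge0.
elim: s {Fs} => [|v s [M [c [c_ge0 IH]]]]; first by exists 0%N, 0.
have [n k_v_gt0] := k_gt0 v.
have {}k_v_gt0 : 0 < k (maxn M n) v.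
  exact: lt_le_trans k_v_gt0 (hitp_nondecreasing _ _ _ _ v (leq_maxr M n)).
set M' := maxn M n; set c' := `|F v| / k M' v.
have c'_ge0 : 0 <= c' := divr_ge0 (normr_ge0 _) (ltW k_v_gt0).
exists M', (c + c'); split=> [|u]; first by rewrite addr_ge0.
have k_u_ge0 : 0 <= k M' u by apply: hitp_ge0.
rewrite inE mulrDl => /orP[/eqP -> | us].
  by rewrite [c' * _]mulfVK ?gt_eqF // lerDr mulr_ge0 ?hitp_ge0.
have := IH u us; have : c * k M u <= c * k M' u.
  by rewrite ler_wpM2l // hitp_nondecreasing // leq_maxl.
have := mulr_ge0 c'_ge0 k_u_ge0; lra.
Qed.

Variable (f : V -> R).
Hypothesis f_harmonic : forall z, z != x -> z != y -> harmonic_at w nb f z.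

Lemma harmonic_killed_step g : f g = f x * (g == x)%:R + f y * (g == y)%:R + K f g.
Proof.
rewrite /K; case: (eqVneq g x) => [->|gx]; first by rewrite (negbTE x_neq_y) /=; ring.
case: (eqVneq g y) => [->|gy] /=; first by ring.
rewrite (f_harmonic _ gx gy) /harmonic_at mulr_sumr !mulr0 !add0r.
by apply: eq_bigr => u _; rewrite /step_prob; ring.
Qed.

Lemma harmonic_iter_killed_step n g :
  f g = f x * h n g + f y * (k n g - h n g) + iter n.+1 K f g.
Proof.
have [h0 hS] := h_killed; have [k0 kS] := k_killed.
elim: n g => [|n IH] g; first by rewrite h0 k0 /= {1}harmonic_killed_step; ring.
rewrite {1}harmonic_killed_step hS kS [iter n.+2 K f g]/= (killed_step_ext _ _ _ IH).
have -> : K (fun u => f x * h n u + f y * (k n u - h n u) + iter n.+1 K f u) g =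
    f x * K (h n) g + f y * (K (k n) g - K (h n) g) + K (iter n.+1 K f) g.
  rewrite /K; case: ifP => _; first by rewrite !mulr0 subrr mulr0 !addr0.
  by rewrite -sumrB !mulr_sumr -!big_split /=; apply: eq_bigr => u _; ring.
ring.
Qed.

Lemma harmonic_truncation_error M c n g : 0 <= c ->
  (forall u, `|f u| <= c * k M u) ->
  `|f g - (f x * h n g + f y * (k n g - h n g))| <= c * (kk g - k n g).
Proof.
move=> c_ge0 domf; rewrite {1}(harmonic_iter_killed_step n g).
rewrite addrC addKr; apply: le_trans (iter_killed_step_norm _ _ n.+1 g domf) _.
rewrite iter_killed_stepZ iter_killed_step_k ler_wpM2l // lerB //.
exact: hitp_le_hit_prob.
Qed.

Lemma harmonic_hit_decomposition M c g : 0 <= c ->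
  (forall u, `|f u| <= c * k M u) ->
  f g = f x * hh g + f y * (kk g - hh g).
Proof.
move=> c_ge0 domf; apply/eqP; rewrite -subr_eq0 -normr_le0.
apply/ler_addgt0Pr => eps eps_gt0; rewrite add0r.
set C := `|f x - f y| + `|f y| + c + 1.
have C_gt0 : 0 < C by rewrite /C; have := normr_ge0 (f x - f y); have := normr_ge0 (f y); lra.
have eps'_gt0 : 0 < eps / C by rewrite divr_gt0.
have [Nh near_h] := hit_prob_approx (pred1 x) (pred1 y) g _ eps'_gt0.
have [Nk near_k] := hit_prob_approx (pred2 x y) pred0 g _ eps'_gt0.
set n := maxn Nh Nk.
have {}near_h := near_h n (leq_maxl _ _).
have {}near_k := near_k n (leq_maxr _ _).
have h_le := hitp_le_hit_prob (pred1 x) (pred1 y) n g.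
have k_le := hitp_le_hit_prob (pred2 x y) pred0 n g.
have err := harmonic_truncation_error _ _ n g c_ge0 domf.
have err_h : `|(f x - f y) * (h n g - hh g)| <= `|f x - f y| * (eps / C).
  by rewrite normrM [`|h n g - _|]distrC [`|hh g - _|]ger0_norm ?subr_ge0 // ler_wpM2l.
have err_k : `|f y * (k n g - kk g)| <= `|f y| * (eps / C).
  by rewrite normrM [`|k n g - _|]distrC [`|kk g - _|]ger0_norm ?subr_ge0 // ler_wpM2l.
have err_c : c * (kk g - k n g) <= c * (eps / C) by rewrite ler_wpM2l.
have sum_le : `|f x - f y| * (eps / C) + `|f y| * (eps / C) + c * (eps / C) <= eps.
  have C_eps : C * (eps / C) = eps by rewrite mulrC divfK ?gt_eqF.
  have eps'_ge0 : 0 <= eps / C := ltW eps'_gt0.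
  by rewrite -!mulrDl -[leRHS]C_eps ler_wpM2r // /C lerDl.
set D := f g - _.
have -> : D = (f g - (f x * h n g + f y * (k n g - h n g)))
    + ((f x - f y) * (h n g - hh g) + f y * (k n g - kk g)) by rewrite /D; ring.
have := ler_normD ((f x - f y) * (h n g - hh g)) (f y * (k n g - kk g)).
have := ler_normD (f g - (f x * h n g + f y * (k n g - h n g)))
  ((f x - f y) * (h n g - hh g) + f y * (k n g - kk g)).
lra.
Qed.

Lemma cond_hit_vanishing_point M c u : 0 <= c ->
  (forall v, `|f v| <= c * k M v) -> f u = 0 ->
  cond_hit w nb x y u * (f x - f y) = - f y.
Proof.
move=> c_ge0 domf fu0; have := harmonic_hit_decomposition _ _ u c_ge0 domf.
rewrite fu0 /cond_hit => dec.
have kk_neq0 : kk u != 0 by rewrite gt_eqF ?kk_gt0.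
apply: (mulIf kk_neq0); rewrite mulrAC divfK //.
by move: dec; lra.
Qed.

Lemma cond_hit_constant_on_zeros (s : seq V) :
  (forall v, v \notin s -> f v = 0) -> (exists v, f v != 0) ->
  exists C, forall u, f u = 0 -> cond_hit w nb x y u = C.
Proof.
move=> fs [v0 fv0]; have [M [c [c_ge0 domf]]] := finsupp_dominated_k _ _ fs.
have cond_zero u : f u = 0 -> cond_hit w nb x y u * (f x - f y) = - f y.
  exact: cond_hit_vanishing_point c_ge0 domf.
exists (- f y / (f x - f y)) => u fu0.
(* If f(x) = f(y), the decomposition at u forces f(x) = f(y) = 0, hence f = 0. *)
have fx_neq_fy : f x - f y != 0.
  apply: contraNneq fv0 => fxy0.
  have /eqP := cond_zero u fu0; rewrite fxy0 mulr0 eq_sym oppr_eq0 => /eqP fy0.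
  have fx0 : f x = 0 by move/eqP: fxy0; rewrite fy0 subr0 => /eqP.
  by rewrite (harmonic_hit_decomposition _ _ v0 c_ge0 domf) fx0 fy0 !mul0r addr0.
by apply: (mulIf fx_neq_fy); rewrite cond_zero // divfK.
Qed.

End KilledWalk.

End HittingProbabilities.

Theorem lemma6p4 (R : realType) (V : eqType) (w : V -> V -> R) (nb : V -> seq V)
    (e x y : V) (f : V -> R) :
  is_lf_wgraph w nb ->
  connected_graph nb ->
  vertex_transitive w ->
  (exists s : seq V, forall v, v \notin s -> f v = 0) ->
  (exists v, f v != 0) ->
  (forall z, z != x -> z != y -> harmonic_at w nb f z) ->
  exists N : nat, (0 < N)%N /\
    forall g g', dist_ge nb N e g -> dist_ge nb N e g' ->
      cond_hit w nb x y g = cond_hit w nb x y g'.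
Proof.
move=> hg hcon _ [s fs] f_nz f_harmonic.
have [N [N_gt0 in_ball]] := seq_in_ball _ _ e s hcon.
have far_f0 u : dist_ge nb N e u -> f u = 0.
  move=> far_u; apply: fs; apply/negP => /in_ball[n n_lt walk_eu].
  exact: far_u n n_lt walk_eu.
exists N; split=> // g g' far_g far_g'.
have [<-|x_neq_y] := eqVneq x y; first by rewrite /cond_hit !hit_prob_self !mul0r.
have [C condC] := cond_hit_constant_on_zeros _ _ _ _ hg _ _ x_neq_y hcon _ f_harmonic _ fs f_nz.
by rewrite !condC ?far_f0.
Qed.
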